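(* Let $N\ge1$, $\varphi,\gamma\in(0,1)$ with $\varphi+\gamma\ge1$, $\alpha=\min\{\varphi,\gamma\}$. Let $(X_t)_{t\ge0}$ be a Markov chain on $\{0,1\}^N$ whose one-step transition probabilities are $$p_{t-1\to t}(\boldsymbol{x},\boldsymbol{y})=\varphi^{\|\boldsymbol{y}\|}\bar\varphi^{N-\|\boldsymbol{y}\|}\Big\{1+\sum_{A\subseteq[N],A\neq\emptyset}\kappa_{t,A}\prod_{k\in A}\Big(1-\frac{\boldsymbol{y}[k]}{\varphi}\Big)\Big(1-\frac{\boldsymbol{x}[k]}{\gamma}\Big)\Big\},\quad \kappa_{t,A}=\Big(\frac{\alpha}{\bar\alpha}\Big)^{|A|}\mathbb{E}\Big[\prod_{k\in A}\Big(1-\frac{Z_t[k]}{\alpha}\Big)\Big],$$ where each $Z_t$ is a random element of $\{0,1\}^N$ with exchangeable coordinates. Then $(\|X_t\|)_t$ is a Markov chain with transition distribution $$p_{t-1\to t}(\|\boldsymbol{y}\|\mid\|\boldsymbol{x}\|)=\binom{N}{\|\boldsymbol{y}\|}\varphi^{\|\boldsymbol{y}\|}\bar\varphi^{N-\|\boldsymbol{y}\|}\Big\{1+\sum_{k=1}^N\binom{N}{k}\tilde\kappa_{t,k}Q_k(\|\boldsymbol{y}\|;N,\varphi)Q_k(\|\boldsymbol{x}\|;N,\gamma)\Big\},$$ where $\tilde\kappa_{t,k}=(\alpha/\bar\alpha)^k\mathbb{E}[Q_k(\|Z_t\|;N,\alpha)]$.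
   Context: $\bar a=1-a$; $[N]=\{1,\dots,N\}$; $\|\boldsymbol{x}\|$ is the number of ones of $\boldsymbol{x}$ (its Hamming distance from $\boldsymbol{0}$). The Krawtchouk polynomials $Q_n(\zeta;N,a)$ are defined by $\sum_{n=0}^N\binom{N}{n}Q_n(\zeta;N,a)s^n=(1-(\bar a/a)s)^\zeta(1+s)^{N-\zeta}$. *)

From HB Require Import structures.
From mathcomp Require Import all_boot all_order all_algebra all_fingroup.
Set Implicit Arguments. Unset Strict Implicit. Unset Printing Implicit Defensive.
Import Order.TTheory GRing.Theory Num.Theory.
Local Open Scope ring_scope.

Definition state (N : nat) := {ffun 'I_N -> bool}.

Definition hw (N : nat) (x : state N) : nat := #|[pred k | x k]|.

Definition bit (R : ringType) (b : bool) : R := (b : nat)%:R.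

(* Krawtchouk polynomial Q_n(zeta; N, a), defined through its generating
   function: binom(N,n) Q_n = [s^n] (1 - (abar/a) s)^zeta (1 + s)^(N-zeta). *)
Definition krawtchouk (R : fieldType) (n zeta N : nat) (a : R) : R :=
  (((1 - ((1 - a) / a)%:P * 'X) ^+ zeta * (1 + 'X) ^+ (N - zeta)) : {poly R})`_n
  / ('C(N, n))%:R.

Definition expect (R : ringType) N (q : state N -> R) (f : state N -> R) : R :=
  \sum_(z : state N) q z * f z.

Definition kappa (R : fieldType) N (alpha : R) (qt : state N -> R)
  (A : {set 'I_N}) : R :=
  (alpha / (1 - alpha)) ^+ #|A| *
  expect qt (fun z => \prod_(k in A) (1 - bit R (z k) / alpha)).

Definition ptrans (R : fieldType) N (phi gamma alpha : R) (qt : state N -> R)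
  (x y : state N) : R :=
  phi ^+ hw y * (1 - phi) ^+ (N - hw y) *
  (1 + \sum_(A : {set 'I_N} | A != set0)
         kappa alpha qt A *
         \prod_(k in A) ((1 - bit R (y k) / phi) * (1 - bit R (x k) / gamma))).

Definition kappat (R : fieldType) N (alpha : R) (qt : state N -> R) (k : nat) : R :=
  (alpha / (1 - alpha)) ^+ k * expect qt (fun z => krawtchouk k (hw z) N alpha).

Definition plump (R : fieldType) N (phi gamma alpha : R) (qt : state N -> R)
  (mx my : nat) : R :=
  ('C(N, my))%:R * phi ^+ my * (1 - phi) ^+ (N - my) *
  (1 + \sum_(1 <= k < N.+1)
         ('C(N, k))%:R * kappat alpha qt k *
         krawtchouk k my N phi * krawtchouk k mx N gamma).

(* Law of the path (X_0, ..., X_T) of a Markov chain with initial law mu and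
   transitions p t (for the step t-1 -> t): probability that ||X_i|| = ms i
   for all i <= T. *)
Definition path_hw_prob (R : ringType) N (mu : state N -> R)
  (p : nat -> state N -> state N -> R) (T : nat) (ms : nat -> nat) : R :=
  \sum_(xs : {ffun 'I_T.+1 -> state N} | [forall i, hw (xs i) == ms (val i)])
     mu (xs ord0) *
     \prod_(i < T) p i.+1 (xs (inord i)) (xs (inord i.+1)).

From mathcomp Require Import all_boot all_order all_algebra all_fingroup.
From mathcomp Require Import ring.
Import Order.TTheory GRing.Theory Num.Theory.
Local Open Scope ring_scope.

(* Write Y for the set of ones of y. Each product over k in A in the kernel
   equals (1 - 1/phi)^|A :&: Y|, and the sum of these powers over the Y with
   |Y| = m is 'C(N, m) Q_m(|A|; phi), read off the generating function of the
   Krawtchouk polynomials; by duality this is 'C(N, m) Q_|A|(m; phi).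
   Exchangeability of Z_t gives kappa_{t,A} = tilde kappa_{t,|A|}, so grouping
   the A by size and summing the (1 - 1/gamma)^|A :&: X| in the same way shows
   that the probability of jumping from x to the level ||y|| = m depends on x
   only through ||x||.  This lumpability makes the law of the path of levels
   factor step by step. *)

Lemma coef_prod_1DXC (R : comNzRingType) n (v : 'I_n -> R) m :
  (\prod_(k < n) (1 + (v k)%:P * 'X))`_m =
  \sum_(A : {set 'I_n} | #|A| == m) \prod_(k in A) v k.
Proof.
under eq_bigr do rewrite addrC.
rewrite (bigA_distr _ _ (fun k => (v k)%:P * 'X) (fun _ => 1)).
rewrite coef_sum [RHS]big_mkcond /=; apply: eq_bigr => A _.
rewrite -big_mkcond /= big_split /= -rmorph_prod prodr_const coefCM coefXn.
by rewrite eq_sym; case: eqP => _; rewrite ?mulr1 ?mulr0.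
Qed.

Lemma prodr_if_mem (R : comNzRingType) (T : finType) (A C : {set T}) (u w : R) :
  \prod_(k in A) (if k \in C then u else w) = u ^+ #|A :&: C| * w ^+ #|A :\: C|.
Proof.
rewrite (big_setID C) -!prodr_const; congr (_ * _); apply: eq_bigr => k.
  by rewrite inE => /andP[_ ->].
by rewrite inE => /andP[/negbTE ->].
Qed.

Lemma sum_card_const (R : nmodType) (T : finType) k (c : R) :
  \sum_(A : {set T} | #|A| == k) c = c *+ 'C(#|T|, k).
Proof.
by rewrite -card_draws -sumr_const; apply: eq_bigl => A; rewrite inE.
Qed.

Lemma sum_nonempty_by_card (R : nmodType) (T : finType) (G : {set T} -> R) :
  \sum_(A : {set T} | A != set0) G A =
  \sum_(1 <= k < #|T|.+1) \sum_(A : {set T} | #|A| == k) G A.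
Proof.
under [RHS]eq_bigr do rewrite big_mkcond.
rewrite exchange_big /= [LHS]big_mkcond; apply: eq_bigr => A _.
under eq_bigr do rewrite eq_sym.
by rewrite -big_mkcond big_nat1_eq card_gt0 ltnS max_card andbT.
Qed.

Lemma card_eq_perm (T : finType) (A B : {set T}) :
  #|A| = #|B| -> exists s : {perm T}, forall x, (s x \in A) = (x \in B).
Proof.
(* Swapping an element of A :\: B with one of B :\: A shrinks A :\: B. *)
move: {2}#|A :\: B| (leqnn #|A :\: B|) => n.
elim: n A => [|n IH] A leAB eqAB.
  have -> : A = B.
    by apply/eqP; rewrite eqEcard -setD_eq0 -cards_eq0 -leqn0 leAB eqAB leqnn.
  by exists 1%g => x; rewrite perm1.
have [AB|/set0Pn[i]] := eqVneq (A :\: B) set0.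
  by apply: IH eqAB; rewrite AB cards0.
rewrite inE => /andP[iB iA].
have /set0Pn[j] : B :\: A != set0.
  rewrite -card_gt0 cardsD setIC -eqAB -cardsD card_gt0.
  by apply/set0Pn; exists i; rewrite inE iB.
rewrite inE => /andP[jA jB].
pose A' := [set x | tperm i j x \in A].
have eqA'B : #|A'| = #|B|.
  rewrite -eqAB -(card_preimset A (@perm_inj _ (tperm i j))).
  by apply: eq_card => x; rewrite !inE.
have ltA'A : (#|A' :\: B| < #|A :\: B|)%N.
  apply: proper_card; apply/properP; split.
    apply/subsetP => x; rewrite !inE => /andP[xB].
    case: tpermP => [_|xj|_ _ ->]; first by rewrite (negbTE jA).
      by rewrite xj jB in xB.
    by rewrite xB.
  by exists i; rewrite !inE ?iB ?iA // tpermL (negbTE jA) andbF.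
have [s Es] := IH A' (leq_trans ltA'A leAB) eqA'B.
by exists (s * tperm i j)%g => x; rewrite permM -Es inE.
Qed.

Lemma max_card_ord {N} (A : {set 'I_N}) : (#|A| <= N)%N.
Proof. by rewrite -[X in (_ <= X)%N]card_ord max_card. Qed.

Definition ones {N} (y : state N) : {set 'I_N} := [set k | y k].

Lemma hw_ones N (y : state N) : hw y = #|ones y|.
Proof. by apply: eq_card => k; rewrite !inE. Qed.

Lemma ones_bij N : bijective (@ones N).
Proof.
exists (fun B : {set 'I_N} => [ffun k => k \in B] : state N) => [y|B].
  by apply/ffunP => k; rewrite ffunE inE.
by apply/setP => k; rewrite inE ffunE.
Qed.

Lemma prod_bit_ones (R : fieldType) N (a : R) (A : {set 'I_N}) (y : state N) :
  \prod_(k in A) (1 - bit R (y k) / a) = (1 - a^-1) ^+ #|A :&: ones y|.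
Proof.
transitivity (\prod_(k in A) (if k \in ones y then 1 - a^-1 else 1)).
  apply: eq_bigr => k _; rewrite inE /bit.
  by case: (y k); rewrite ?mul1r ?mul0r ?subr0.
by rewrite prodr_if_mem expr1n mulr1.
Qed.

Lemma sum_card_krawtchouk (R : numFieldType) N (a : R) (C : {set 'I_N}) n :
  a != 0 ->
  \sum_(A : {set 'I_N} | #|A| == n) (1 - a^-1) ^+ #|A :&: C| =
  'C(N, n)%:R * krawtchouk n #|C| N a.
Proof.
move=> a0.
(* For n > N, krawtchouk divides by 'C(N, n) = 0 and both sides vanish. *)
have [nN|Nn] := leqP n N; last first.
  rewrite bin_small // mul0r big_pred0 // => A.
  by apply/negbTE; rewrite neq_ltn (leq_ltn_trans (max_card_ord A)).
have gf : \prod_(k < N) (1 + (if k \in C then 1 - a^-1 else 1)%:P * 'X) =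
          (1 - ((1 - a) / a)%:P * 'X) ^+ #|C| * (1 + 'X) ^+ (N - #|C|).
  transitivity (\prod_(k in [set: 'I_N])
      (if k \in C then 1 - ((1 - a) / a)%:P * 'X else 1 + 'X)).
    apply: eq_big => [k|k _]; first by rewrite inE.
    have -> : 1 - a^-1 = - ((1 - a) / a) by field.
    by case: (k \in C); rewrite ?polyCN ?mulNr ?mul1r.
  by rewrite prodr_if_mem setTI setTD [#|~: C|]cardsCs setCK card_ord.
rewrite /krawtchouk -gf coef_prod_1DXC mulrC divfK ?pnatr_eq0 -?lt0n ?bin_gt0 //.
by apply: eq_bigr => A _; rewrite prodr_if_mem expr1n mulr1.
Qed.

Lemma krawtchouk_sym (R : numFieldType) N (a : R) m n :
  a != 0 -> (m <= N)%N -> (n <= N)%N ->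
  krawtchouk m n N a = krawtchouk n m N a.
Proof.
move=> a0 mN nN.
pose S p q := \sum_(C : {set 'I_N} | #|C| == p)
              \sum_(A : {set 'I_N} | #|A| == q) (1 - a^-1) ^+ #|A :&: C|.
have SE p q : S p q = 'C(N, p)%:R * 'C(N, q)%:R * krawtchouk q p N a.
  rewrite /S (eq_bigr (fun=> 'C(N, q)%:R * krawtchouk q p N a)).
    by rewrite sum_card_const card_ord -mulrA !mulr_natl.
  by move=> C /eqP <-; apply: sum_card_krawtchouk.
have : S n m = S m n.
  rewrite /S exchange_big; apply: eq_bigr => A _.
  by apply: eq_bigr => C _; rewrite setIC.
rewrite !SE [X in X * _ = _]mulrC => /mulfI; apply.
by rewrite mulf_neq0 // pnatr_eq0 -lt0n bin_gt0.
Qed.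

Lemma sum_card_krawtchouk_dual (R : numFieldType) N (a : R) (A : {set 'I_N}) m :
  a != 0 -> (m <= N)%N ->
  \sum_(B : {set 'I_N} | #|B| == m) (1 - a^-1) ^+ #|A :&: B| =
  'C(N, m)%:R * krawtchouk #|A| m N a.
Proof.
move=> a0 mN; rewrite -krawtchouk_sym ?max_card_ord // -sum_card_krawtchouk //.
by apply: eq_bigr => B _; rewrite setIC.
Qed.

Definition exchangeable {R : Type} {N} (q : state N -> R) :=
  forall (s : 'S_N) (z : state N), q [ffun k => z (s k)] = q z.

Lemma expect_prod_exchangeable (R : comNzRingType) N (q : state N -> R)
    (h : bool -> R) (A B : {set 'I_N}) :
  exchangeable q -> #|A| = #|B| ->
  expect q (fun z => \prod_(k in A) h (z k)) =
  expect q (fun z => \prod_(k in B) h (z k)).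
Proof.
move=> exq /card_eq_perm[s sAB].
rewrite /expect [RHS](reindex (fun z : state N => [ffun k => z (s k)])) /=.
  apply: eq_bigr => z _; rewrite exq; congr (_ * _).
  rewrite [LHS](reindex_inj (@perm_inj _ s)) /=.
  by apply: eq_big => [k|k _]; rewrite ?sAB ?ffunE.
by exists (fun z : state N => [ffun k => z ((s^-1)%g k)]) => z _;
  apply/ffunP => k; rewrite !ffunE ?permK ?permKV.
Qed.

Lemma kappa_card (R : numFieldType) N (al : R) (q : state N -> R)
    (A : {set 'I_N}) :
  al != 0 -> exchangeable q -> kappa al q A = kappat al q #|A|.
Proof.
move=> al0 exq; rewrite /kappa /kappat; congr (_ * _).
have binA : 'C(N, #|A|)%:R != 0 :> R.
  by rewrite pnatr_eq0 -lt0n bin_gt0 max_card_ord.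
apply: (mulfI binA).
transitivity (\sum_(B : {set 'I_N} | #|B| == #|A|)
                expect q (fun z => \prod_(k in B) (1 - bit R (z k) / al))).
  pose h b := 1 - bit R b / al.
  rewrite [RHS](eq_bigr (fun=> expect q (fun z => \prod_(k in A) h (z k)))).
    by rewrite sum_card_const card_ord mulr_natl.
  by move=> B /eqP; apply: (@expect_prod_exchangeable _ _ q h).
rewrite /expect exchange_big mulr_sumr; apply: eq_bigr => z _.
rewrite -mulr_sumr mulrCA hw_ones -sum_card_krawtchouk //.
by congr (_ * _); apply: eq_bigr => B _; apply: prod_bit_ones.
Qed.

Lemma ptransE (R : fieldType) N (phi gamma al : R) (q : state N -> R)
    (x y : state N) :
  ptrans phi gamma al q x y =
  phi ^+ #|ones y| * (1 - phi) ^+ (N - #|ones y|) *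
  (1 + \sum_(A : {set 'I_N} | A != set0) kappa al q A *
         ((1 - phi^-1) ^+ #|A :&: ones y| * (1 - gamma^-1) ^+ #|A :&: ones x|)).
Proof.
by rewrite /ptrans hw_ones; under eq_bigr do rewrite big_split /= !prod_bit_ones.
Qed.

Lemma sum_ptrans_hw (R : numFieldType) N (phi gamma al : R) (q : state N -> R)
    (x : state N) m :
  phi != 0 -> gamma != 0 -> al != 0 -> exchangeable q ->
  \sum_(y | hw y == m) ptrans phi gamma al q x y = plump phi gamma al q (hw x) m.
Proof.
move=> phi0 gamma0 al0 exq.
have [mN|Nm] := leqP m N; last first.
  rewrite /plump bin_small // !mul0r big_pred0 // => y.
  by apply/negbTE; rewrite hw_ones neq_ltn (leq_ltn_trans (max_card_ord _)).
pose g A := (1 - gamma^-1) ^+ #|A :&: ones x|.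
have sum_size k : (k <= N)%N ->
    \sum_(A : {set 'I_N} | #|A| == k) \sum_(B : {set 'I_N} | #|B| == m)
       kappa al q A * ((1 - phi^-1) ^+ #|A :&: B| * g A) =
    'C(N, m)%:R * ('C(N, k)%:R * kappat al q k * krawtchouk k m N phi *
                   krawtchouk k (hw x) N gamma).
  move=> kN; transitivity (\sum_(A : {set 'I_N} | #|A| == k)
      'C(N, m)%:R * krawtchouk k m N phi * kappat al q k * g A).
    apply: eq_bigr => A /eqP <-.
    rewrite -sum_card_krawtchouk_dual // !mulr_suml; apply: eq_bigr => B _.
    by rewrite kappa_card //; ring.
  by rewrite -mulr_sumr /g sum_card_krawtchouk // -hw_ones; ring.
transitivity (phi ^+ m * (1 - phi) ^+ (N - m) *
  \sum_(B : {set 'I_N} | #|B| == m)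
     (1 + \sum_(A | A != set0)
            kappa al q A * ((1 - phi^-1) ^+ #|A :&: B| * g A))).
  rewrite mulr_sumr [RHS](reindex ones (onW_bij _ (ones_bij N))) /=.
  by apply: eq_big => [y|y]; rewrite hw_ones // => /eqP eym; rewrite ptransE eym.
rewrite big_split /= sum_card_const card_ord exchange_big /=.
rewrite sum_nonempty_by_card card_ord.
under eq_big_nat => k /andP[_ kN] do rewrite sum_size //.
by rewrite -mulr_sumr /plump; ring.
Qed.

Section RconsFfun.
Variables (S : finType) (T : nat).

Definition rcons_ffun (xs : {ffun 'I_T.+1 -> S}) (y : S) : {ffun 'I_T.+2 -> S} :=
  [ffun i : 'I_T.+2 => if (i < T.+1)%N then xs (inord i) else y].

Lemma rcons_ffun_inord xs y i :
  (i < T.+1)%N -> rcons_ffun xs y (inord i) = xs (inord i).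
Proof. by move=> ltiT; rewrite ffunE inordK ?ltiT // ltnW. Qed.

Lemma rcons_ffun_last xs y : rcons_ffun xs y (inord T.+1) = y.
Proof. by rewrite ffunE inordK // ltnn. Qed.

Lemma rcons_ffun_bij :
  bijective (fun p : {ffun 'I_T.+1 -> S} * S => rcons_ffun p.1 p.2).
Proof.
exists (fun xs : {ffun 'I_T.+2 -> S} =>
          ([ffun j : 'I_T.+1 => xs (inord j)], xs ord_max)).
  move=> [xs y] /=; congr (_, _); last by rewrite ffunE ltnn.
  by apply/ffunP => j; rewrite ffunE rcons_ffun_inord // inord_val.
move=> xs; apply/ffunP => i; rewrite ffunE /=; case: ltnP => [ltiT|leTi].
  by rewrite ffunE inordK // inord_val.
suff -> : i = ord_max by [].
by apply/val_inj/eqP; rewrite eqn_leq leTi -ltnS ltn_ord.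
Qed.

Lemma forall_rcons_ffun (P : nat -> S -> bool) xs y :
  [forall i : 'I_T.+2, P i (rcons_ffun xs y i)] =
  [forall i : 'I_T.+1, P i (xs i)] && P T.+1 y.
Proof.
apply/forallP/andP => [Pxy|[/forallP Px Py] i].
  split; last by have := Pxy (inord T.+1); rewrite rcons_ffun_last inordK.
  apply/forallP => j; have := Pxy (inord j).
  by rewrite rcons_ffun_inord // !inordK ?inord_val //; apply: leqW.
rewrite /rcons_ffun ffunE; case: ltnP => [ltiT|leTi].
  by have := Px (inord i); rewrite inordK.
suff -> : val i = T.+1 by [].
by apply/eqP; rewrite eqn_leq leTi -ltnS ltn_ord.
Qed.

Lemma rcons_ffun_ord0 xs y : rcons_ffun xs y ord0 = xs ord0.
Proof. by rewrite /rcons_ffun ffunE /=; congr (xs _); apply/val_inj/inordK. Qed.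

End RconsFfun.

Arguments rcons_ffun {S T}.

Lemma path_hw_prob_lumped (R : nzRingType) N (mu : state N -> R)
    (p : nat -> state N -> state N -> R) (L : nat -> nat -> nat -> R) :
  (forall t x m, \sum_(y | hw y == m) p t x y = L t (hw x) m) ->
  forall T ms, path_hw_prob mu p T ms =
    (\sum_(x | hw x == ms 0%N) mu x) * \prod_(i < T) L i.+1 (ms i) (ms i.+1).
Proof.
move=> lumpL; elim=> [|T IH] ms.
  rewrite big_ord0 mulr1 /path_hw_prob.
  rewrite (reindex (fun x : state N => [ffun _ : 'I_1 => x])); last first.
    exists (fun xs : {ffun 'I_1 -> state N} => xs ord0) => [x _|xs _].
      by rewrite ffunE.
    by apply/ffunP => i; rewrite ffunE (ord1 i).
  apply: eq_big => [x|x _]; last by rewrite ffunE big_ord0 mulr1.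
  by apply/forallP/idP => [/(_ ord0)|xm i]; rewrite ffunE // (ord1 i).
pose w n (xs : {ffun 'I_n.+1 -> state N}) :=
  mu (xs ord0) * \prod_(i < n) p i.+1 (xs (inord i)) (xs (inord i.+1)).
have w_rcons xs y : w T.+1 (rcons_ffun xs y) = w T xs * p T.+1 (xs (inord T)) y.
  rewrite /w big_ord_recr /= mulrA rcons_ffun_ord0 rcons_ffun_inord //.
  rewrite rcons_ffun_last; congr (_ * _ * _); apply: eq_bigr => i _.
  by rewrite !rcons_ffun_inord ?ltnS ?ltn_ord ?(ltnW (ltn_ord i)).
transitivity
  (\sum_(xs : {ffun 'I_T.+1 -> state N} | [forall i, hw (xs i) == ms i])
     \sum_(y | hw y == ms T.+1) w T xs * p T.+1 (xs (inord T)) y).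
  rewrite /path_hw_prob (reindex _ (onW_bij _ (rcons_ffun_bij (state N) T))) /=.
  rewrite pair_big_dep.
  apply: eq_big => -[xs y] /=; last by move=> _; apply: w_rcons.
  exact: (@forall_rcons_ffun _ _ (fun i x => hw x == ms i)).
under eq_bigr => xs /forallP hw_xs.
  rewrite -mulr_sumr lumpL.
  have /eqP -> : hw (xs (inord T)) == ms T.
    by have := hw_xs (inord T); rewrite inordK.
  over.
by rewrite -mulr_suml -/(path_hw_prob mu p T ms) IH big_ord_recr /= mulrA.
Qed.

Theorem proposition8 (R : realFieldType) (N : nat) (phi gamma : R)
  (q : nat -> state N -> R) (mu : state N -> R) :
  (1 <= N)%N ->
  0 < phi < 1 -> 0 < gamma < 1 -> 1 <= phi + gamma ->
  (* Z_t has law q t: a probability distribution with exchangeable coordinates *)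
  (forall t z, 0 <= q t z) ->
  (forall t, \sum_(z : state N) q t z = 1) ->
  (forall t (s : 'S_N) (z : state N), q t [ffun k => z (s k)] = q t z) ->
  (* the given one-step kernels are (nonnegative) transition probabilities *)
  (forall t x y, 0 <= ptrans phi gamma (Num.min phi gamma) (q t) x y) ->
  (* initial law of X_0 *)
  (forall x, 0 <= mu x) -> \sum_(x : state N) mu x = 1 ->
  (* conclusion: (||X_t||)_t is Markov with the lumped transitions *)
  forall (T : nat) (ms : nat -> nat),
    path_hw_prob mu (fun t => ptrans phi gamma (Num.min phi gamma) (q t)) T ms =
    (\sum_(x : state N | hw x == ms 0%N) mu x) *
    \prod_(i < T) plump phi gamma (Num.min phi gamma) (q i.+1) (ms i) (ms i.+1).
Proof.
(* The lumping identity is algebraic: only phi, gamma <> 0 and the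
   exchangeability of Z_t are used. *)
move=> _ /andP[phi_gt0 _] /andP[gamma_gt0 _] _ _ _ exq _ _ _.
have al_gt0 : 0 < Num.min phi gamma by rewrite lt_min phi_gt0 gamma_gt0.
apply: (@path_hw_prob_lumped _ _ mu _ (fun t => plump phi gamma _ (q t))).
move=> t x m; apply: sum_ptrans_hw; [exact: lt0r_neq0 .. | exact: exq].
Qed.
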